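(* Let $\mathbf{M}_1,\dots,\mathbf{M}_L$ be nonsingular $D\times D$ integer matrices that are pairwise commutative and coprime, and let $\mathbf{R}=\mathbf{M}_1\cdots\mathbf{M}_L\mathbf{U}$ with $\mathbf{U}$ any unimodular matrix (such $\mathbf{R}$ are lcrm's of the $\mathbf{M}_i$). Let $\mathbf{W}_i=\mathbf{M}_1\cdots\mathbf{M}_{i-1}\mathbf{M}_{i+1}\cdots\mathbf{M}_L$. Then there exist integer matrices $\widehat{\mathbf{W}}_i,\mathbf{Q}_i$ with $\mathbf{W}_i\widehat{\mathbf{W}}_i+\mathbf{M}_i\mathbf{Q}_i=\mathbf{I}$, and for any such choice every $\mathbf{m}\in\mathcal{N}(\mathbf{R})$ satisfies $\mathbf{m}=\big\langle\sum_{i=1}^L\mathbf{W}_i\widehat{\mathbf{W}}_i\langle\mathbf{m}\rangle_{\mathbf{M}_i}\big\rangle_{\mathbf{R}}$; in particular $\mathbf{m}\in\mathcal{N}(\mathbf{R})$ is uniquely determined by its remainders.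
   Context: All matrices are $D\times D$ integer matrices; unimodular means integer with determinant $\pm1$. Commuting nonsingular integer matrices are coprime if all their common left (equivalently right) divisors are unimodular, where $\mathbf{A}$ is a left divisor of $\mathbf{M}$ if $\mathbf{A}^{-1}\mathbf{M}$ is integer. An lcrm of $\mathbf{M}_1,\dots,\mathbf{M}_L$ is a nonsingular integer $\mathbf{R}=\mathbf{M}_i\mathbf{P}_i$ (integer $\mathbf{P}_i$, all $i$) such that every such common right multiple equals $\mathbf{R}\mathbf{A}$ for integer $\mathbf{A}$. $\mathcal{N}(\mathbf{M})=\{\mathbf{k}\in\mathbb{Z}^D:\mathbf{k}=\mathbf{M}\mathbf{x},\ \mathbf{x}\in[0,1)^D\}$; $\langle\mathbf{m}\rangle_{\mathbf{M}}$ is the unique $\mathbf{r}\in\mathcal{N}(\mathbf{M})$ with $\mathbf{m}-\mathbf{r}\in\mathbf{M}\mathbb{Z}^D$. *)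

From HB Require Import structures.
From mathcomp Require Import all_boot all_order all_algebra.
Set Implicit Arguments. Unset Strict Implicit. Unset Printing Implicit Defensive.
Import Order.TTheory GRing.Theory Num.Theory.
Local Open Scope ring_scope.

Definition nonsingular D (M : 'M[int]_D) : Prop := \det M != 0.

Definition unimodular D (A : 'M[int]_D) : Prop := \det A = 1 \/ \det A = -1.

(* A is a left divisor of M: A^{-1} M is an integer matrix, i.e. M = A X
   for some integer X (A is nonsingular whenever M is). *)
Definition left_divisor D (A M : 'M[int]_D) : Prop :=
  nonsingular A /\ exists X : 'M[int]_D, M = A *m X.

Definition mx_coprime D (M1 M2 : 'M[int]_D) : Prop :=
  forall A : 'M[int]_D, left_divisor A M1 -> left_divisor A M2 -> unimodular A.

Definition prodmx D (s : seq 'M[int]_D) : 'M[int]_D := foldr mulmx 1%:M s.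

Definition in_lattice D (M : 'M[int]_D) (v : 'cV[int]_D) : Prop :=
  exists x : 'cV[int]_D, v = M *m x.

Definition int2rat_mx m n (A : 'M[int]_(m, n)) : 'M[rat]_(m, n) :=
  map_mx (fun z : int => z%:~R) A.

(* N(M) = { k in Z^D : k = M x, x in [0,1)^D }.  For nonsingular M the
   vector x = M^{-1} k is rational, so x ranges over rational vectors. *)
Definition in_N D (M : 'M[int]_D) (k : 'cV[int]_D) : Prop :=
  exists x : 'cV[rat]_D, int2rat_mx k = int2rat_mx M *m x /\
    forall i, 0 <= x i 0 /\ x i 0 < 1.

(* r = <m>_M : r in N(M) and m - r in M Z^D (unique such r). *)
Definition is_rem D (M : 'M[int]_D) (m r : 'cV[int]_D) : Prop :=
  in_N M r /\ in_lattice M (m - r).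

Definition Wmx D L (M : 'I_L -> 'M[int]_D) (i : 'I_L) : 'M[int]_D :=
  prodmx [seq M j | j <- enum 'I_L & j != i].

Definition Pmx D L (M : 'I_L -> 'M[int]_D) : 'M[int]_D :=
  prodmx [seq M j | j <- enum 'I_L].

(* Modulo M_j only the j-th summand survives (every other W_i contains the
   factor M_j, which commutes to the front), and there W_j What_j = 1 - M_j Q_j
   acts as the identity, so the sum is congruent to m modulo every M_j.  It
   remains to see that a vector lying in every lattice M_j Z^D lies in R Z^D.
   This is proved one factor at a time: if A and B commute and satisfy a
   Bezout identity A X + B Y = 1, then B Z^D contains a whenever it contains
   A a, so A Z^D and B Z^D intersect in A B Z^D.  The Bezout identities come
   from the Smith normal form of [A B], whose diagonal part is a common left
   divisor of A and B.  Uniqueness follows likewise: two points of N(R) with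
   the same remainders differ by a vector of R Z^D, and N(R) meets every coset
   of R Z^D only once. *)
From HB Require Import structures.
From mathcomp Require Import all_boot all_order all_algebra.
From mathcomp Require Import lra zify.
Set Implicit Arguments. Unset Strict Implicit. Unset Printing Implicit Defensive.
Import Order.TTheory GRing.Theory Num.Theory.
Local Open Scope ring_scope.

Definition mx_bezout D (A B : 'M[int]_D) : Prop :=
  exists X Y, A *m X + B *m Y = 1%:M.

Lemma in_lattice0 D (A : 'M[int]_D) : in_lattice A 0.
Proof. by exists 0; rewrite mulmx0. Qed.

Lemma in_latticeM D (A : 'M[int]_D) w : in_lattice A (A *m w).
Proof. by exists w. Qed.

Lemma in_latticeD D (A : 'M[int]_D) u v :
  in_lattice A u -> in_lattice A v -> in_lattice A (u + v).
Proof. by move=> [x ->] [y ->]; exists (x + y); rewrite mulmxDr. Qed.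

Lemma in_latticeB D (A : 'M[int]_D) u v :
  in_lattice A u -> in_lattice A v -> in_lattice A (u - v).
Proof. by move=> [x ->] [y ->]; exists (x - y); rewrite mulmxBr. Qed.

Lemma in_lattice_sum D (A : 'M[int]_D) (I : finType) (P : pred I) F :
  (forall i, P i -> in_lattice A (F i)) -> in_lattice A (\sum_(i | P i) F i).
Proof.
by move=> AF; apply: (big_ind (in_lattice A)) => //;
  [exact: in_lattice0 | exact: in_latticeD].
Qed.

Lemma in_lattice_unitmx D (A U : 'M[int]_D) v : U \in unitmx ->
  in_lattice A v -> in_lattice (A *m U) v.
Proof. by move=> uU [x ->]; exists (invmx U *m x); rewrite -mulmxA mulKVmx. Qed.

Lemma unimodular_unitmx D (U : 'M[int]_D) : unimodular U -> U \in unitmx.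
Proof. by rewrite unitmxE => -[->|->]; rewrite ?unitr1 ?unitrN1. Qed.

Lemma int2rat_mxM m n p (A : 'M[int]_(m, n)) (B : 'M[int]_(n, p)) :
  int2rat_mx (A *m B) = int2rat_mx A *m int2rat_mx B.
Proof. exact: map_mxM. Qed.

Lemma int2rat_mxB m n (A B : 'M[int]_(m, n)) :
  int2rat_mx (A - B) = int2rat_mx A - int2rat_mx B.
Proof. exact: map_mxB. Qed.

Lemma int2rat_unitmx D (A : 'M[int]_D) : nonsingular A -> int2rat_mx A \in unitmx.
Proof. by rewrite unitmxE /int2rat_mx det_map_mx /= unitfE intr_eq0. Qed.

Lemma is_rem_exists D (A : 'M[int]_D) m : nonsingular A -> exists r, is_rem A m r.
Proof.
move=> /int2rat_unitmx uA.
pose x := invmx (int2rat_mx A) *m int2rat_mx m.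
pose y := \col_i Num.floor (x i 0).
exists (m - A *m y); split; last by rewrite opprB addrC subrK; exact: in_latticeM.
exists (x - int2rat_mx y); split.
  by rewrite int2rat_mxB int2rat_mxM mulmxBr mulKVmx.
move=> i; have /andP[lb ub] := floor_itv (x i 0).
have -> : (x - int2rat_mx y) i 0 = x i 0 - (Num.floor (x i 0))%:~R by rewrite !mxE.
rewrite intrD in ub; split; lra.
Qed.

Lemma in_N_lattice_eq D (A : 'M[int]_D) m m' : nonsingular A ->
  in_N A m -> in_N A m' -> in_lattice A (m - m') -> m = m'.
Proof.
move=> /int2rat_unitmx uA [x [Ex x01]] [x' [Ex' x'01]] [z Ez].
have Ezx : int2rat_mx z = x - x'.
  apply: (can_inj (mulKmx uA)).
  by rewrite -int2rat_mxM -Ez int2rat_mxB Ex Ex' mulmxBr.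
suff z0 : z = 0 by apply/eqP; rewrite -subr_eq0 Ez z0 mulmx0.
apply/matrixP=> i j; rewrite (ord1 j) mxE.
move/matrixP: Ezx => /(_ i 0); rewrite !mxE => Ezi.
have [? ?] := x01 i; have [? ?] := x'01 i.
have : (z i 0)%:~R < 1 :> rat by rewrite Ezi; lra.
have : -1 < (z i 0)%:~R :> rat by rewrite Ezi; lra.
rewrite -[1 : rat]/(1%:~R) -[-1 : rat]/((-1)%:~R) !ltr_int; lia.
Qed.

Lemma intr_Zp_eq0 (n : nat) (x : int) : (1 < n)%N ->
  ((x%:~R : 'Z_n) == 0) = (n %| `|x|)%N.
Proof.
move=> n_gt1; rewrite [x in x%:~R]intEsign intrM rmorphXn /= rmorphN1 mulr_sign.
have absx0 : ((`|x|%N%:~R : 'Z_n) == 0) = (n %| `|x|)%N.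
  by rewrite -[_%:~R]/((`|x|%N)%:R) -(inj_eq val_inj) /= (val_Zp_nat n_gt1).
by case: (x < 0); rewrite ?oppr_eq0 absx0.
Qed.

Lemma adj_mulmxC D (A B : 'M[int]_D) : \det B != 0 -> A *m B = B *m A ->
  \adj B *m A = A *m \adj B.
Proof.
move=> detB0 AB; apply/eqP; rewrite -subr_eq0.
have : (\adj B *m A - A *m \adj B) *m B *m \adj B = 0.
  rewrite !mulmxBl -(mulmxA _ A B) AB mulmxA mul_adj_mx -(mulmxA A) mul_adj_mx.
  by rewrite scalar_mxC subrr.
by rewrite -mulmxA mul_mx_adj mul_mx_scalar => /eqP; rewrite scalemx_eq0 (negbTE detB0).
Qed.

(* Reduce modulo n = |det B|.  There A is onto the column space V of adj B
   (adj B = A (adj B) X), hence injective on the finite set V; since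
   A (adj B a) = adj B (B w) = det B w vanishes, so does adj B a. *)
Lemma dvdz_det_adj_mulmx D (A B : 'M[int]_D) (a w : 'cV[int]_D) :
  \det B != 0 -> A *m B = B *m A -> mx_bezout A B -> A *m a = B *m w ->
  forall i, (\det B %| (\adj B *m a) i ord0)%Z.
Proof.
move=> detB0 AB [X [Y bezAB]] Eaw.
have adjA := adj_mulmxC detB0 AB.
set d := \det B in detB0 *; set G := \adj B in adjA *.
have [d1|d_neq1] := eqVneq `|d|%N 1%N; first by move=> i; rewrite unfold_in d1 dvd1n.
set n := `|d|%N.
have n_gt1 : (1 < n)%N by rewrite ltn_neqAle eq_sym d_neq1 lt0n absz_eq0.
pose red m p (C : 'M[int]_(m, p)) := map_mx (fun z : int => z%:~R : 'Z_n) C.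
have redM m p q (C1 : 'M_(m, p)) (C2 : 'M_(p, q)) :
    red _ _ (C1 *m C2) = red _ _ C1 *m red _ _ C2 by rewrite /red map_mxM.
have red_d : red _ _ (d%:M : 'M_D) = 0.
  rewrite /red map_scalar_mx /=.
  have -> : (d%:~R : 'Z_n) = 0 by apply/eqP; rewrite intr_Zp_eq0.
  by apply/matrixP=> i j; rewrite !mxE mul0rn.
have GAX : red _ _ (A *m (G *m X)) = red _ _ G.
  have -> : A *m (G *m X) = G - d%:M *m Y.
    rewrite -[X in _ = X - _]mulmx1 -bezAB mulmxDr !mulmxA mul_adj_mx adjA.
    by rewrite addrK.
  by rewrite /red map_mxB -!/(red _ _ _) redM red_d mul0mx subr0.
set V := [set red _ _ G *m y | y : 'cV['Z_n]_D].
have V_sub_AV : V \subset [set red _ _ A *m v | v in V].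
  apply/subsetP=> _ /imsetP [y _ ->]; apply/imsetP.
  exists (red _ _ G *m (red _ _ X *m y)); first by apply/imsetP; exists (red _ _ X *m y).
  by rewrite !mulmxA -!redM -mulmxA GAX.
have injA : {in V &, injective (mulmx (red _ _ A))}.
  apply/imset_injP; rewrite eqn_leq leq_imset_card /=.
  exact: subset_leq_card.
have Ga0 : red _ _ G *m red _ _ a = 0.
  apply: injA; first by apply/imsetP; exists (red _ _ a).
    by apply/imsetP; exists 0; rewrite ?mulmx0.
  rewrite mulmx0 mulmxA -!redM -adjA -mulmxA Eaw mulmxA mul_adj_mx.
  by rewrite redM red_d mul0mx.
move=> i; move/matrixP: Ga0 => /(_ i ord0); rewrite -redM /red !mxE => /eqP.
by rewrite intr_Zp_eq0.
Qed.

Lemma in_lattice_bezout_cancel D (A B : 'M[int]_D) (a : 'cV[int]_D) :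
  nonsingular B -> A *m B = B *m A -> mx_bezout A B ->
  in_lattice B (A *m a) -> in_lattice B a.
Proof.
move=> detB0 AB bezAB [w Eaw].
have dvd_adj := dvdz_det_adj_mulmx detB0 AB bezAB Eaw.
set d := \det B in detB0 dvd_adj *.
pose z := \col_i ((\adj B *m a) i ord0 %/ d)%Z.
have Ez : \adj B *m a = d *: z.
  apply/matrixP=> i j; rewrite !mxE (ord1 j) mulrC.
  by have := dvd_adj i; rewrite !mxE => /divzK ->.
exists z; apply/eqP; rewrite -subr_eq0.
have : d *: (a - B *m z) == 0.
  by rewrite scalerBr -mul_scalar_mx -(mul_mx_adj B) -mulmxA Ez -scalemxAr subrr.
by rewrite scalemx_eq0 (negbTE detB0).
Qed.

Lemma in_lattice_mulmx_bezout D (A B : 'M[int]_D) v :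
  nonsingular B -> A *m B = B *m A -> mx_bezout A B ->
  in_lattice A v -> in_lattice B v -> in_lattice (A *m B) v.
Proof.
move=> detB0 AB bezAB [a ->] /(in_lattice_bezout_cancel detB0 AB bezAB) [z ->].
by rewrite mulmxA; exact: in_latticeM.
Qed.

Lemma mx_bezoutC D (A B : 'M[int]_D) : mx_bezout A B -> mx_bezout B A.
Proof. by move=> [X [Y bezAB]]; exists Y, X; rewrite addrC. Qed.

(* From the Smith normal form [A B] = S [Dg 0] T, the matrix C := S Dg is a
   common left divisor of A and B, hence unimodular, and T^-1 [C^-1; 0] is a
   right inverse of [A B]. *)
Lemma mx_bezout_coprime D (A B : 'M[int]_D) :
  nonsingular A -> mx_coprime A B -> mx_bezout A B.
Proof.
move=> detA0 copAB.
have [S uS [T uT [d _ E]]] := int_Smith_normal_form (row_mx A B).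
pose Dg : 'M[int]_D := \matrix_(i, j) (d`_i *+ (i == j :> nat)).
have EDg : (\matrix_(i, j) (d`_i *+ (i == j :> nat)) : 'M_(D, D + D))
    = Dg *m row_mx 1%:M 0.
  rewrite mul_mx_row mulmx1 mulmx0; apply/matrixP=> i j.
  rewrite !mxE; case: splitP => k /= ->; rewrite ?mxE //.
  by rewrite ltn_eqF ?mulr0n // (leq_trans (ltn_ord i) (leq_addr k D)).
set C := S *m Dg; set P := row_mx 1%:M 0 *m T.
have : row_mx A B = C *m P by rewrite E EDg !mulmxA.
rewrite -[P]hsubmxK mul_mx_row => /eq_row_mx [EA EB].
have detC0 : \det C != 0.
  by apply: contraNneq detA0 => detC0; rewrite EA det_mulmx detC0 mul0r.
have uC : C \in unitmx.
  by apply/unimodular_unitmx/copAB; split=> //; [exists (lsubmx P) | exists (rsubmx P)].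
pose Z := invmx T *m col_mx (invmx C) 0.
exists (usubmx Z), (dsubmx Z).
rewrite -mul_row_col vsubmxK E EDg /Z !mulmxA (mulmxK uT) -/C -(mulmxA C).
by rewrite mul_row_col mul1mx mul0mx addr0 mulmxV.
Qed.

(* A X + B Y = 1 and A X' + C Y' = 1 give A (X + B X' Y) + B C (Y' Y) = 1. *)
Lemma mx_bezoutM D (A B C : 'M[int]_D) : B *m A = A *m B ->
  mx_bezout A B -> mx_bezout A C -> mx_bezout A (B *m C).
Proof.
move=> BA [X [Y bezAB]] [X' [Y' bezAC]].
exists (X + B *m X' *m Y), (Y' *m Y).
have EBY : B *m Y = A *m (B *m X' *m Y) + B *m C *m (Y' *m Y).
  rewrite !mulmxA -BA -(mulmxA B A) -(mulmxA B C) -mulmxDl -mulmxDr bezAC.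
  by rewrite mulmx1.
by rewrite -bezAB EBY mulmxDr addrA.
Qed.

Lemma prodmx_cons D (A : 'M[int]_D) s : prodmx (A :: s) = A *m prodmx s.
Proof. by []. Qed.

Lemma prodmx_mulmxC D (A : 'M[int]_D) s :
  (forall B, B \in s -> A *m B = B *m A) -> A *m prodmx s = prodmx s *m A.
Proof.
elim: s => [|B s IHs] AC; first by rewrite mulmx1 mul1mx.
rewrite prodmx_cons mulmxA AC ?mem_head // -!mulmxA IHs //.
by move=> C sC; apply: AC; rewrite in_cons sC orbT.
Qed.

Lemma nonsingular_prodmx D (s : seq 'M[int]_D) :
  (forall B, B \in s -> nonsingular B) -> nonsingular (prodmx s).
Proof.
rewrite /nonsingular; elim: s => [|B s IHs] ns; first by rewrite det1 oner_neq0.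
rewrite prodmx_cons det_mulmx mulf_neq0 ?(ns _ (mem_head _ _)) //.
by apply: IHs => C sC; apply: ns; rewrite in_cons sC orbT.
Qed.

Lemma mx_bezout_prodmx D (A : 'M[int]_D) s :
  (forall B, B \in s -> B *m A = A *m B /\ mx_bezout A B) -> mx_bezout A (prodmx s).
Proof.
elim: s => [|B s IHs] bez.
  by exists 0, 1%:M; rewrite mulmx0 add0r mulmx1.
have [BA bezAB] := bez B (mem_head _ _).
rewrite prodmx_cons; apply: mx_bezoutM BA bezAB _.
by apply: IHs => C sC; apply: bez; rewrite in_cons sC orbT.
Qed.

Lemma prodmx_left_factor D (A : 'M[int]_D) s :
  {in s &, forall B C, B *m C = C *m B} -> A \in s ->
  exists K, prodmx s = A *m K.
Proof.
elim: s => [|B s IHs] // sC; rewrite in_cons prodmx_cons.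
have [-> _|_ /= sA] := eqVneq A B; first by exists (prodmx s).
have sC' : {in s &, forall B C, B *m C = C *m B}.
  by move=> C C' sC1 sC2; apply: sC; rewrite in_cons ?sC1 ?sC2 orbT.
have [K ->] := IHs sC' sA; exists (B *m K).
by rewrite !mulmxA (sC B A) ?mem_head // in_cons sA orbT.
Qed.

Section CoprimeFamily.

Variables (D L : nat) (M : 'I_L -> 'M[int]_D).
Hypothesis M_nonsingular : forall i, nonsingular (M i).
Hypothesis M_comm : forall i j, M i *m M j = M j *m M i.
Hypothesis M_coprime : forall i j, i != j -> mx_coprime (M i) (M j).

Lemma mx_bezout_prodmx_notin i (l : seq 'I_L) :
  i \notin l -> mx_bezout (M i) (prodmx [seq M j | j <- l]).
Proof.
move=> il; apply: mx_bezout_prodmx => _ /mapP [j jl ->]; split; first exact: M_comm.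
apply: mx_bezout_coprime; first exact: M_nonsingular.
by apply: M_coprime; apply: contraNneq il => ->.
Qed.

Lemma in_lattice_prodmx (l : seq 'I_L) v : uniq l ->
  (forall j, j \in l -> in_lattice (M j) v) -> in_lattice (prodmx [seq M j | j <- l]) v.
Proof.
elim: l => [|k l IHl]; first by move=> _ _; exists v; rewrite mul1mx.
rewrite cons_uniq => /andP [kl ul] Mv; rewrite map_cons prodmx_cons.
apply: in_lattice_mulmx_bezout (mx_bezout_prodmx_notin kl) _ _.
- by apply: nonsingular_prodmx => _ /mapP [j _ ->].
- by apply: prodmx_mulmxC => _ /mapP [j _ ->].
- exact: Mv (mem_head _ _).
- by apply: IHl => // j jl; apply: Mv; rewrite in_cons jl orbT.
Qed.

Lemma Wmx_bezout i : mx_bezout (Wmx M i) (M i).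
Proof. by apply/mx_bezoutC/mx_bezout_prodmx_notin; rewrite mem_filter eqxx. Qed.

Lemma in_lattice_Wmx i j v : i != j -> in_lattice (M j) (Wmx M i *m v).
Proof.
move=> ij; have [K ->] : exists K, Wmx M i = M j *m K.
  apply: prodmx_left_factor; first by move=> _ _ /mapP [k _ ->] /mapP [k' _ ->].
  by apply: map_f; rewrite mem_filter mem_enum eq_sym ij.
by rewrite -mulmxA; exact: in_latticeM.
Qed.

Lemma Wmx_sum_congr (What Q : 'I_L -> 'M[int]_D) (r : 'I_L -> 'cV[int]_D) m j :
  (forall i, Wmx M i *m What i + M i *m Q i = 1%:M) ->
  in_lattice (M j) (m - r j) ->
  in_lattice (M j) (\sum_(i < L) Wmx M i *m What i *m r i - m).
Proof.
move=> bez [x Ex]; rewrite (bigD1 j) //= addrAC; apply: in_latticeD.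
  have -> : Wmx M j *m What j = 1%:M - M j *m Q j by rewrite -(bez j) addrK.
  exists (- x - Q j *m r j).
  by rewrite mulmxBl mul1mx mulmxBr mulmxN -Ex mulmxA opprB addrAC.
by apply: in_lattice_sum => i ij; rewrite -mulmxA; apply: in_lattice_Wmx.
Qed.

Variable U : 'M[int]_D.
Hypothesis U_unimodular : unimodular U.

Lemma nonsingular_lcrm : nonsingular (Pmx M *m U).
Proof.
have : nonsingular (Pmx M) by apply: nonsingular_prodmx => _ /mapP [j _ ->].
rewrite /nonsingular det_mulmx => PM0; rewrite mulf_neq0 //.
by case: U_unimodular => ->.
Qed.

Lemma in_lattice_lcrm v :
  (forall j, in_lattice (M j) v) -> in_lattice (Pmx M *m U) v.
Proof.
move=> Mv; apply: in_lattice_unitmx (unimodular_unitmx U_unimodular) _.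
by apply: in_lattice_prodmx => //; rewrite enum_uniq.
Qed.

End CoprimeFamily.

Unset Implicit Arguments.

Theorem theorem2 (D L : nat) (M : 'I_L -> 'M[int]_D) (U : 'M[int]_D) :
  (forall i, nonsingular (M i)) ->
  (forall i j, M i *m M j = M j *m M i) ->
  (forall i j, i != j -> mx_coprime (M i) (M j)) ->
  unimodular U ->
  let R := Pmx M *m U in
  (exists (What Q : 'I_L -> 'M[int]_D),
      forall i, Wmx M i *m What i + M i *m Q i = 1%:M) /\
  (forall (What Q : 'I_L -> 'M[int]_D),
      (forall i, Wmx M i *m What i + M i *m Q i = 1%:M) ->
      forall (m : 'cV[int]_D) (r : 'I_L -> 'cV[int]_D),
        in_N R m -> (forall i, is_rem (M i) m (r i)) ->
        is_rem R (\sum_(i < L) Wmx M i *m What i *m r i) m) /\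
  (forall (m m' : 'cV[int]_D), in_N R m -> in_N R m' ->
      (forall i r, is_rem (M i) m r -> is_rem (M i) m' r) -> m = m').
Proof.
move=> M_ns M_comm M_cop U_unimod R.
have latR := in_lattice_lcrm M_ns M_comm M_cop U_unimod.
split.
  have /fin_all_exists [XY bezXY] : forall i, exists XY : 'M[int]_D * 'M[int]_D,
      Wmx M i *m XY.1 + M i *m XY.2 = 1%:M.
    by move=> i; have [X [Y bez]] := Wmx_bezout M_ns M_comm M_cop i; exists (X, Y).
  by exists (fun i => (XY i).1), (fun i => (XY i).2).
split.
  move=> What Q bez m r mN mr; split=> //; apply: latR => j.
  exact: Wmx_sum_congr bez (mr j).2.
move=> m m' mN m'N same_rem.
apply: in_N_lattice_eq (nonsingular_lcrm M_ns U_unimod) mN m'N _; apply: latR => j.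
have [r mr] := is_rem_exists m (M_ns j).
have -> : m - m' = (m - r) - (m' - r) by rewrite opprB addrA subrK.
exact: in_latticeB mr.2 (same_rem j r mr).2.
Qed.
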